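(* Let $w\in S_n$ and $I\subseteq\mathrm{CInv}(w)$ nonempty. Choose $(w(i),w(j))\in I$ with $w(j)$ minimal, and let $w'$ be the permutation obtained by removing the covering inversion $(w(i),w(j))$ from $w$. Then $I\setminus\{(w(i),w(j))\}\subseteq\mathrm{CInv}(w')$.
   Context: Permutations are in one-line notation. A covering inversion of $w\in S_n$ is a pair of values $(w(i),w(j))$ with $i<j$, $w(i)>w(j)$, and $w(k)<w(j)$ for all $i<k<j$ (equivalently, $i$ is maximal among positions $i<j$ with $w(i)>w(j)$). $\mathrm{CInv}(w)$ is the set of covering inversions of $w$. Removing the covering inversion $(w(i),w(j))$ from $w$ means forming the permutation $w'$ obtained from $w$ by exchanging the values in positions $i$ and $j$. *)

From mathcomp Require Import all_boot all_fingroup.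
Set Implicit Arguments. Unset Strict Implicit. Unset Printing Implicit Defensive.
Import GroupScope.

(* A permutation w : 'S_n in one-line notation: positions and values are 'I_n,
   w i is the value at position i. *)

Definition is_cinv n (w : 'S_n) (a b : 'I_n) : bool :=
  let i := (w^-1)%g a in
  let j := (w^-1)%g b in
  [&& (i < j)%N, (b < a)%N &
      [forall k : 'I_n, ((i < k)%N && (k < j)%N) ==> (w k < b)%N]].

Definition CInv n (w : 'S_n) : {set 'I_n * 'I_n} :=
  [set p : 'I_n * 'I_n | is_cinv w p.1 p.2].

(* Removing (a, b) = (w(i), w(j)): exchange the values in positions i and j.
   In mathcomp, (s * t) x = t (s x), so (tperm i j * w) k = w (tperm i j k). *)
Definition remove_cinv n (w : 'S_n) (p : 'I_n * 'I_n) : 'S_n :=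
  (tperm ((w^-1)%g p.1) ((w^-1)%g p.2) * w)%g.

(** Work with positions instead of values: (w i, w j) is a covering inversion
    of w iff the pair of positions (i, j) is, and removing (w i0, w j0) turns
    w into w' = w o (i0 j0), which carries the values w i, w j to the
    positions s i, s j, where s is the transposition (i0 j0).  Since w j0 is
    minimal, no other covering inversion (i, j) can have an end inside
    the interval (i0, j0]: every value there is at most w j0 < w j < w i.
    Hence for k strictly between s i and s j, either s k lies strictly
    between i and j, or s k lies in (i0, j0]; in both cases
    w' k = w (s k) < w j. *)

From mathcomp Require Import all_boot all_fingroup.
From mathcomp Require Import zify.
Set Implicit Arguments.
Unset Strict Implicit.
Unset Printing Implicit Defensive.
Import GroupScope.

Definition cinv_at n (w : 'S_n) (i j : 'I_n) : bool :=
  [&& (i < j)%N, (w j < w i)%N &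
      [forall k : 'I_n, (i < k < j)%N ==> (w k < w j)%N]].

Section CoveringPositions.

Variables (n : nat) (w : 'S_n).

Lemma cinv_atP (i j : 'I_n) :
  reflect [/\ (i < j)%N, (w j < w i)%N &
              forall k : 'I_n, (i < k < j)%N -> (w k < w j)%N]
          (cinv_at w i j).
Proof.
apply: (iffP and3P) => -[ltij wji wk]; split=> //.
  by move=> k; apply/implyP; move/forallP: wk.
by apply/forallP => k; apply/implyP/wk.
Qed.

Lemma in_CInv (i j : 'I_n) : ((w i, w j) \in CInv w) = cinv_at w i j.
Proof. by rewrite inE /is_cinv /cinv_at /= !permK. Qed.

Lemma cinv_at_le (i j k : 'I_n) :
  cinv_at w i j -> (i < k <= j)%N -> (w k <= w j)%N.
Proof.
case/cinv_atP => _ _ wk /andP[ltik]; rewrite leq_eqVlt => /orP[/eqP kj | ltkj].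
  by rewrite (val_inj kj).
by rewrite ltnW // wk ?ltik.
Qed.

Lemma cinv_at_inj_left (i i' j : 'I_n) :
  cinv_at w i j -> cinv_at w i' j -> i = i'.
Proof.
move=> cij ci'j; case/cinv_atP: (cij) => ltij wji wk.
case/cinv_atP: (ci'j) => lti'j wji' wk'.
case: (ltngtP i i') => [lt | lt | /val_inj //].
  by have := wk i'; rewrite lt lti'j => /(_ isT); rewrite ltnNge ltnW.
by have := wk' i; rewrite lt ltij => /(_ isT); rewrite ltnNge ltnW.
Qed.

End CoveringPositions.

Lemma val_tperm n (x y z : 'I_n) :
  tperm x y z = (if z == x :> nat then y else if z == y :> nat then x else z)
    :> nat.
Proof.
by case: tpermP => [-> | -> | /eqP zx /eqP zy]; rewrite ?eqxx //;
  [case: eqP => [/val_inj -> | ] | rewrite !val_eqE (negPf zx) (negPf zy)].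
Qed.

Lemma tperm_mulK n (w : 'S_n) (x y k : 'I_n) : (tperm x y * w) (tperm x y k) = w k.
Proof. by rewrite permM tpermK. Qed.

Lemma cinv_at_tperm n (w : 'S_n) (i0 j0 i j : 'I_n) :
  cinv_at w i0 j0 -> cinv_at w i j -> (w j0 < w j)%N ->
  cinv_at (tperm i0 j0 * w) (tperm i0 j0 i) (tperm i0 j0 j).
Proof.
move=> c0 c lt0; have [ltij wji wk] := cinv_atP _ _ _ c.
have [lt0ij _ _] := cinv_atP _ _ _ c0.
have j_out : ~~ (i0 < j <= j0)%N.
  by apply: contraL lt0 => /(cinv_at_le c0); rewrite leqNgt.
have i_out : ~~ (i0 < i <= j0)%N.
  apply: contraL lt0 => /(cinv_at_le c0) le_i0.
  by rewrite -leqNgt (leq_trans (ltnW wji)).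
set s := tperm i0 j0.
apply/cinv_atP; split; rewrite ?tperm_mulK //.
  by rewrite !val_tperm; do !case: eqP; lia.
move=> k; rewrite -[k](tpermK i0 j0) tperm_mulK; move: (s k) => t st_between.
have : (i < t < j)%N || (i0 < t <= j0)%N.
  by move: st_between; rewrite !val_tperm; do !case: eqP; lia.
case/orP => [/wk // | /(cinv_at_le c0) le_j0].
exact: leq_ltn_trans le_j0 lt0.
Qed.

Lemma remove_cinvE n (w : 'S_n) (i j : 'I_n) :
  remove_cinv w (w i, w j) = tperm i j * w.
Proof. by rewrite /remove_cinv /= !permK. Qed.

Theorem lemma5p6 (n : nat) (w : 'S_n) (I : {set 'I_n * 'I_n})
    (p : 'I_n * 'I_n) :
  I \subset CInv w ->
  p \in I ->
  (forall q, q \in I -> (p.2 <= q.2)%N) ->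
  I :\ p \subset CInv (remove_cinv w p).
Proof.
have pos_pair (q : 'I_n * 'I_n) : exists i j, q = (w i, w j).
  by exists (w^-1 q.1), (w^-1 q.2); rewrite !permKV; case: q.
move=> sIC pI p_min; apply/subsetP => q /setD1P[qp qI].
have [i0 [j0 def_p]] := pos_pair p; have [i [j def_q]] := pos_pair q.
have c0 : cinv_at w i0 j0 by rewrite -in_CInv -def_p (subsetP sIC).
have c : cinv_at w i j by rewrite -in_CInv -def_q (subsetP sIC).
have lt0 : (w j0 < w j)%N.
  have := p_min q qI; rewrite def_p def_q /= leq_eqVlt => /orP[/eqP/val_inj | //].
  move/perm_inj => ej; move: c0; rewrite ej => /(cinv_at_inj_left c) ei.
  by rewrite def_p def_q ei ej eqxx in qp.
rewrite def_p remove_cinvE def_q.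
by rewrite -(tperm_mulK w i0 j0 i) -(tperm_mulK w i0 j0 j) in_CInv cinv_at_tperm.
Qed.
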